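(* Consider the discrete-time fractional-order system $\Delta^{\alpha}x[k+1]=Ax[k]+Bu[k]$ with $x[k]\in\mathbb{R}^n$, $u[k]\in\mathbb{R}^p$, and fix $K\ge1$. For $S\subseteq[n]=\{1,\dots,n\}$ let $\mathbb{I}^S$ be the matrix formed by the rows of $I_n$ indexed by $S$, and let $f(S)=\operatorname{rank}([\Theta\ \ \Xi])$ where $\Theta,\Xi$ are constructed as in the context with $C=\mathbb{I}^S$. Then $f:2^{[n]}\to\mathbb{R}$ is submodular, i.e., $f(S\cup T)+f(S\cap T)\le f(S)+f(T)$ for all $S,T\subseteq[n]$.
   Context: $\psi(\alpha_i,j)=\frac{\Gamma(j-\alpha_i)}{\Gamma(-\alpha_i)\Gamma(j+1)}$ and $\Delta^{\alpha_i}x_i[k]=\sum_{j=0}^{k}\psi(\alpha_i,j)x_i[k-j]$. $D(\alpha,j)=\operatorname{diag}(\psi(\alpha_1,j),\dots,\psi(\alpha_n,j))$, $A_0=A-D(\alpha,1)$, $A_j=-D(\alpha,j+1)$ for $j\ge1$, $G_0=I_n$, $G_k=\sum_{j=0}^{k-1}A_jG_{k-1-j}$. $\Theta=[(CG_0)^T,\dots,(CG_{K-1})^T]^T$ and $\Xi$ is the $K\times K$ block lower-triangular matrix whose $(r,s)$ block is $CG_{r-s-1}B$ for $r>s$ and $0$ otherwise. *)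

From HB Require Import structures.
From mathcomp Require Import all_boot all_order all_algebra.
From mathcomp Require Import reals.
Set Implicit Arguments. Unset Strict Implicit. Unset Printing Implicit Defensive.
Import Order.TTheory GRing.Theory Num.Theory.
Local Open Scope ring_scope.

Section FracDefs.
Variable R : realType.

(* psi(a,j) = Gamma(j-a)/(Gamma(-a) Gamma(j+1)) = prod_{i<j} (i - a)/(i+1) *)
Definition psi (a : R) (j : nat) : R :=
  \prod_(i < j) ((i%:R - a) / (i.+1)%:R).

Variable n : nat.

Definition Dmat (alpha : 'I_n -> R) (j : nat) : 'M[R]_n :=
  diag_mx (\row_i psi (alpha i) j).

Definition Amat (A : 'M[R]_n) (alpha : 'I_n -> R) (j : nat) : 'M[R]_n :=
  if j is 0 then A - Dmat alpha 1 else - Dmat alpha j.+1.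

Fixpoint Glist (A : 'M[R]_n) (alpha : 'I_n -> R) (k : nat) : seq 'M[R]_n :=
  match k with
  | 0 => [:: 1%:M]
  | k'.+1 => let l := Glist A alpha k' in
             rcons l (\sum_(j < k'.+1) Amat A alpha j *m nth 0 l (k' - j))
  end.

Definition Gmat (A : 'M[R]_n) (alpha : 'I_n -> R) (k : nat) : 'M[R]_n :=
  nth 0 (Glist A alpha k) k.

(* I^S : rows of I_n indexed by S (in increasing order) *)
Definition selmx (S : {set 'I_n}) : 'M[R]_(#|S|, n) :=
  \matrix_(i, j) (enum_val i == j)%:R.

Variable p : nat.

Definition Theta (A : 'M[R]_n) (alpha : 'I_n -> R) (K : nat) (m : nat)
    (C : 'M[R]_(m, n)) : 'M[R]_(\sum_(k < K) m, n) :=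
  \mxcol_(k < K) (C *m Gmat A alpha k).

Definition Xi (A : 'M[R]_n) (B : 'M[R]_(n, p)) (alpha : 'I_n -> R) (K : nat)
    (m : nat) (C : 'M[R]_(m, n)) : 'M[R]_(\sum_(r < K) m, \sum_(s < K) p) :=
  \mxblock_(r < K, s < K)
     (if (s < r)%N then C *m Gmat A alpha (r - s - 1) *m B else 0 : 'M[R]_(m, p)).

Definition frank (A : 'M[R]_n) (B : 'M[R]_(n, p)) (alpha : 'I_n -> R) (K : nat)
    (S : {set 'I_n}) : R :=
  (\rank (row_mx (Theta A alpha K (selmx S)) (Xi A B alpha K (selmx S))))%:R.

End FracDefs.

(** The rows of [[Θ Ξ]] are indexed by pairs (time step [k], output [i]), and
    choosing [C = I^S] keeps exactly the rows whose output index lies in [S].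
    Hence [f(S)] is the dimension of the span of a set of rows of one fixed
    matrix (the one built with [C = I_n]), and the set of rows kept depends on
    [S] through a preimage, which commutes with unions and intersections.
    Submodularity then follows from
    [dim (U + V) + dim (U ∩ V) = dim U + dim V], applied to the spans of the
    rows kept for [S] and for [T]. *)
From HB Require Import structures.
From mathcomp Require Import all_boot all_order all_algebra.
From mathcomp Require Import reals.
Import Order.TTheory GRing.Theory Num.Theory.
Local Open Scope ring_scope.
Set Implicit Arguments. Unset Strict Implicit.

Section RowSpan.
Variables (F : fieldType) (N w : nat) (M : 'M[F]_(N, w)).

Definition rowspan (X : {set 'I_N}) := (\sum_(i in X) <<row i M>>)%MS.

Lemma rowspanS (X Y : {set 'I_N}) : X \subset Y -> (rowspan X <= rowspan Y)%MS.
Proof.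
move=> sXY; apply/sumsmx_subP => i Xi.
exact: (sumsmx_sup i (subsetP sXY i Xi) (submx_refl _)).
Qed.

Lemma rowspanU (X Y : {set 'I_N}) :
  (rowspan (X :|: Y) <= rowspan X + rowspan Y)%MS.
Proof.
apply/sumsmx_subP => i; rewrite inE => /orP[Xi | Yi].
  exact: submx_trans (sumsmx_sup i Xi (submx_refl _)) (addsmxSl _ _).
exact: submx_trans (sumsmx_sup i Yi (submx_refl _)) (addsmxSr _ _).
Qed.

Lemma mxrank_rowspan_submod (X Y : {set 'I_N}) :
  (\rank (rowspan (X :|: Y)) + \rank (rowspan (X :&: Y))
    <= \rank (rowspan X) + \rank (rowspan Y))%N.
Proof.
rewrite -(mxrank_sum_cap (rowspan X) (rowspan Y)) leq_add ?mxrankS ?rowspanU //.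
by rewrite sub_capmx !rowspanS ?subsetIl ?subsetIr.
Qed.

Lemma eqmx_rowsub_span m (f : 'I_m -> 'I_N) :
  (rowsub f M :=: rowspan (f @: setT))%MS.
Proof.
apply/eqmxP/andP; split.
  apply/row_subP => x; rewrite row_rowsub.
  apply: submx_trans (sumsmx_sup (f x) _ (submx_refl _)); last exact: imset_f.
  by rewrite genmxE.
apply/sumsmx_subP => _ /imsetP[x _ ->].
by rewrite genmxE -row_rowsub row_sub.
Qed.

End RowSpan.

Lemma rowsub_row_mx (F : Type) m m' n1 n2 (f : 'I_m' -> 'I_m)
    (M1 : 'M[F]_(m, n1)) (M2 : 'M[F]_(m, n2)) :
  row_mx (rowsub f M1) (rowsub f M2) = rowsub f (row_mx M1 M2).
Proof. by apply/matrixP => i j; rewrite !mxE; case: splitP => k _; rewrite !mxE. Qed.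

Lemma imset_enum_val (T : finType) (S : {set T}) :
  [set enum_val i | i in [set: 'I_#|S|]] = S.
Proof.
apply/setP => t; apply/imsetP/idP => [[i _ ->] | St]; first exact: enum_valP.
by exists (enum_rank_in St t); rewrite ?enum_rankK_in.
Qed.

Section BlockRows.
Variable K : nat.

Definition block_row m (s : 'I_(\sum_(k < K) m)) : 'I_m := tagnat.sig2 s.

Definition block_lift m m' (f : 'I_m' -> 'I_m) (s : 'I_(\sum_(k < K) m')) :
    'I_(\sum_(k < K) m) :=
  @tagnat.Rank K (fun=> m) (tagnat.sig1 s) (f (block_row s)).

Variables (m m' : nat) (f : 'I_m' -> 'I_m).

Lemma block_lift1 s : tagnat.sig1 (block_lift f s) = tagnat.sig1 s.
Proof. exact: tagnat.Rank1K. Qed.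

Lemma block_lift2 s : block_row (block_lift f s) = f (block_row s).
Proof. by apply: val_inj; rewrite /block_row tagnat.Rank2K. Qed.

Lemma block_lift_Rank i x :
  block_lift f (@tagnat.Rank K (fun=> m') i x) = tagnat.Rank i (f x).
Proof.
rewrite /block_lift /block_row tagnat.Rank1K tagnat.Rank2K.
by congr (tagnat.Rank _ (f _)); apply: val_inj.
Qed.

Lemma imset_block_lift :
  block_lift f @: setT = @block_row m @^-1: (f @: setT).
Proof.
apply/setP => t; rewrite inE; apply/imsetP/imsetP => [[s _ ->] | [x _ fx]].
  by exists (block_row s); rewrite ?block_lift2.
exists (@tagnat.Rank K (fun=> m') (tagnat.sig1 t) x) => //.
by rewrite block_lift_Rank -fx tagnat.sig2K.
Qed.

End BlockRows.

Arguments block_row {K m}.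

Section Observability.
Variables (R : realType) (n p K : nat) (alpha : 'I_n -> R).
Variables (A : 'M[R]_n) (B : 'M[R]_(n, p)).

Lemma selmx_rowsub (S : {set 'I_n}) : selmx R S = rowsub enum_val 1%:M.
Proof. by apply/matrixP => i j; rewrite !mxE eq_sym. Qed.

Variables (m m' : nat) (f : 'I_m' -> 'I_m) (C : 'M[R]_(m, n)).

Lemma Theta_rowsub :
  Theta A alpha K (rowsub f C) = rowsub (block_lift f) (Theta A alpha K C).
Proof.
apply/matrixP => s j; rewrite !mxE block_lift1; apply: eq_bigr => i _.
by rewrite -[tagnat.sig2 (block_lift _ _)]/(block_row _) block_lift2 mxE.
Qed.

Lemma Xi_rowsub :
  Xi A B alpha K (rowsub f C) = rowsub (block_lift f) (Xi A B alpha K C).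
Proof.
apply/matrixP => s t; rewrite !mxE block_lift1 -[tagnat.sig2 s]/(block_row s).
rewrite -[tagnat.sig2 (block_lift _ _)]/(block_row _) block_lift2.
by case: ifP => _; rewrite -?mulmxA ?mul_rowsub_mx !mxE.
Qed.

End Observability.

Theorem theorem2 (R : realType) (n p K : nat) (alpha : 'I_n -> R)
    (A : 'M[R]_n) (B : 'M[R]_(n, p)) :
  (1 <= K)%N ->
  forall S T : {set 'I_n},
    frank A B alpha K (S :|: T) + frank A B alpha K (S :&: T)
    <= frank A B alpha K S + frank A B alpha K T.
Proof.
move=> _ S T.
pose M := row_mx (Theta A alpha K 1%:M) (Xi A B alpha K 1%:M).
have frankE U : frank A B alpha K U = (\rank (rowspan M (block_row @^-1: U)))%:R.
  rewrite /frank selmx_rowsub Theta_rowsub Xi_rowsub rowsub_row_mx.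
  by rewrite (eqmx_rowsub_span M) imset_block_lift imset_enum_val.
rewrite !frankE -!natrD ler_nat preimsetU preimsetI.
exact: mxrank_rowspan_submod.
Qed.
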